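(* Let $\mathbf D$ be a Condorcet super-domain, let $V$ be a finite set of odd cardinality, let $(T_v)_{v\in V}$ be a family of tilings with all $T_v\in\mathbf D$, and let $T=sm((T_v)_{v\in V})$. Then $\mathbf D\cup\{T\}$ is a Condorcet super-domain.
   Context: Fix an integer $n\ge 3$ and write $[n]=\{1,\dots,n\}$. Let $\Lambda$ be the set of 3-element subsets of $[n]$; a triple $\{i,j,k\}$ with $i<j<k$ is written $ijk$. For a 4-element subset $F=\{i<j<k<l\}$ of $[n]$, the stick of $F$ is the sequence $(ijk,\ ijl,\ ikl,\ jkl)$. A tiling (the inversion set of a rhombus tiling of the zonogon $Z(n;2)$) is a subset $T\subseteq\Lambda$ such that for every 4-element $F\subseteq[n]$, $T\cap\mathrm{stick}(F)$ is an initial segment or a final segment of the stick (empty set and whole stick allowed). For a finite set $V$ of odd cardinality and tilings $(T_v)_{v\in V}$, $sm((T_v)_{v\in V})$ is the set of triples lying in $T_v$ for more than $|V|/2$ indices $v$. A set $\mathbf D$ of tilings is a Condorcet super-domain if for every finite $V$ of odd cardinality and every family $(T_v)_{v\in V}$ with all $T_v\in\mathbf D$, $sm((T_v)_{v\in V})$ is a tiling. *)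

From mathcomp Require Import all_boot.
Set Implicit Arguments. Unset Strict Implicit. Unset Printing Implicit Defensive.

(* Triples of [n] are 3-element subsets of 'I_n (elements 0..n-1 model 1..n). *)
Definition triples (n : nat) : {set {set 'I_n}} := [set t : {set 'I_n} | #|t| == 3].

Definition stick (n : nat) (i j k l : 'I_n) : seq {set 'I_n} :=
  [:: [set i; j; k]; [set i; j; l]; [set i; k; l]; [set j; k; l]].

Definition init_or_final (n : nat) (T : {set {set 'I_n}}) (s : seq {set 'I_n}) : Prop :=
  exists m : nat, m <= size s /\
    ([seq x <- s | x \in T] = take m s \/ [seq x <- s | x \in T] = drop m s).

Definition tiling (n : nat) (T : {set {set 'I_n}}) : Prop :=
  T \subset triples n /\
  forall i j k l : 'I_n, i < j -> j < k -> k < l -> init_or_final T (stick i j k l).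

Definition sm (n : nat) (V : finType) (Tv : V -> {set {set 'I_n}}) : {set {set 'I_n}} :=
  [set t : {set 'I_n} | #|V| < 2 * #|[set v : V | t \in Tv v]| ].

Definition condorcet_super_domain (n : nat) (D : {set {set {set 'I_n}}}) : Prop :=
  (forall T, T \in D -> tiling T) /\
  forall (V : finType) (Tv : V -> {set {set 'I_n}}),
    odd #|V| -> (forall v, Tv v \in D) -> tiling (sm Tv).

(* A set of triples is a tiling iff, for any three entries x, y, z of a stick
   taken in stick order, its membership profile on (x, y, z) is not
   alternating, i.e. not of the form (c, ~c, c); and simple majority acts
   coordinatewise on profiles.  Fix such x, y, z and let T be the majority of
   a family from D.  Every non-alternating profile of T is the profile of a
   member of that family: two strict majorities of an odd electorate meet, and
   non-alternation of a common member forces the remaining coordinate.  If now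
   the majority of a family from D and T had profile (c, ~c, c), meeting its
   majorities pairwise would give members with profiles (c, ~c, ~c),
   (~c, ~c, c) and (c, c, c), which may be taken in D.  But the majority of
   these three members of D has profile (c, ~c, c) again, so it is not a
   tiling, although D is a Condorcet super-domain. *)

From mathcomp Require Import all_boot zify.
Set Implicit Arguments. Unset Strict Implicit. Unset Printing Implicit Defensive.

Section Majority.
Variable X : finType.

(* [sm] is convertible to [majority] at [X := {set 'I_n}]. *)
Definition majority (V : finType) (F : V -> {set X}) : {set X} :=
  [set x | #|V| < 2 * #|[set v | x \in F v]|].

Definition family3 (A B C : {set X}) (i : 'I_3) : {set X} := nth A [:: A; B; C] i.

Lemma in_majority3 A B C x :
  (x \in majority (family3 A B C)) =
  [|| (x \in A) && (x \in B), (x \in A) && (x \in C) | (x \in B) && (x \in C)].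
Proof.
rewrite inE card_ord -sum1_card big_mkcond /= !big_ord_recr big_ord0 /= !inE.
by case: (x \in A) (x \in B) (x \in C) => [] [] [].
Qed.

Lemma majority_sub (V : finType) (F : V -> {set X}) (U : {set X}) :
  (forall v, F v \subset U) -> majority F \subset U.
Proof.
move=> FU; apply/subsetP => x; rewrite inE => maj.
have /set0Pn [v] : [set v | x \in F v] != set0.
  by rewrite -card_gt0; case: #|_| maj.
by rewrite inE => /(subsetP (FU v)).
Qed.

Section OddFamily.
Variables (V : finType) (F : V -> {set X}).
Hypothesis oddV : odd #|V|.

Lemma majority_agree x :
  #|V| < 2 * #|[set v | (x \in F v) == (x \in majority F)]|.
Proof.
set A := [set v | x \in F v].
have [inM | notinM] := boolP (x \in majority F).
  have -> : [set v | (x \in F v) == true] = A by apply/setP => v; rewrite !inE eqb_id.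
  by rewrite inE in inM.
have -> : [set v | (x \in F v) == false] = ~: A.
  by apply/setP => v; rewrite !inE eqbF_neg.
have cardA := cardsC A; rewrite inE -leqNgt in notinM.
have : 2 * #|A| != #|V| by apply: contraTneq oddV => <-; rewrite oddM.
move: cardA notinM; set a := #|A|; set c := #|~: A|; lia.
Qed.

Lemma majority_pair x y :
  exists v, (x \in F v) = (x \in majority F) /\ (y \in F v) = (y \in majority F).
Proof.
have := majority_agree x; have := majority_agree y.
set A := [set v | _ == (x \in _)]; set B := [set v | _ == (y \in _)] => bigB bigA.
have /set0Pn [v] : A :&: B != set0.
  rewrite -card_gt0; have := cardsUI A B; have := max_card (A :|: B); lia.
by rewrite !inE => /andP [/eqP xv /eqP yv]; exists v.
Qed.

End OddFamily.

Section Profiles.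
Variables x y z : X.

Definition alternating (p : bool * bool * bool) : bool :=
  let: (a, b, c) := p in (a == c) && (a != b).

Definition profile (S : {set X}) : bool * bool * bool := (x \in S, y \in S, z \in S).

Section NonAlternatingFamily.
Variables (V : finType) (F : V -> {set X}).
Hypotheses (oddV : odd #|V|) (altF : forall v, ~~ alternating (profile (F v))).

Lemma majority_profile_realized :
  ~~ alternating (profile (majority F)) -> exists v, profile (F v) = profile (majority F).
Proof.
(* Agree with the majority on two coordinates that, by non-alternation,
   determine the third. *)
rewrite /profile => altM.
have [xz | xNz] := eqVneq (x \in majority F) (z \in majority F).
  have [v [xv zv]] := majority_pair F oddV x z; exists v.
  move: (altF v) altM; rewrite /profile xv zv xz.
  by case: (y \in F v) (y \in majority F) (z \in majority F) => [] [] [].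
have [yz | yNz] := eqVneq (y \in majority F) (z \in majority F).
  have [v [xv yv]] := majority_pair F oddV x y; exists v.
  move: (altF v) xNz; rewrite /profile xv yv yz.
  by case: (z \in F v) (x \in majority F) (z \in majority F) => [] [] [].
have [v [yv zv]] := majority_pair F oddV y z; exists v.
move: (altF v) altM xNz yNz; rewrite /profile yv zv.
by case: (x \in F v) (x \in majority F) (y \in majority F) (z \in majority F) => [] [] [] [].
Qed.

Lemma majority_alternating_witnesses c :
  profile (majority F) = (c, ~~ c, c) ->
  [/\ exists v, profile (F v) = (c, ~~ c, ~~ c),
      exists v, profile (F v) = (~~ c, ~~ c, c)
    & exists v, profile (F v) = (c, c, c)].
Proof.
case=> Mx My Mz; split.
- have [v [xv yv]] := majority_pair F oddV x y; exists v.
  by move: (altF v); rewrite /profile xv yv Mx My; case: {Mx My Mz} c (z \in F v) => [] [].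
- have [v [yv zv]] := majority_pair F oddV y z; exists v.
  by move: (altF v); rewrite /profile yv zv My Mz; case: {Mx My Mz} c (x \in F v) => [] [].
- have [v [xv zv]] := majority_pair F oddV x z; exists v.
  by move: (altF v); rewrite /profile xv zv Mx Mz; case: {Mx My Mz} c (y \in F v) => [] [].
Qed.

End NonAlternatingFamily.

Section Adjoin.
Variable D : {set {set X}}.
Hypothesis altD : forall R, R \in D -> ~~ alternating (profile R).
Hypothesis alt3 : forall A B C, A \in D -> B \in D -> C \in D ->
  ~~ alternating (profile (majority (family3 A B C))).

Lemma profile_adjoin_majority (V : finType) (F : V -> {set X}) R :
  odd #|V| -> (forall v, F v \in D) -> ~~ alternating (profile (majority F)) ->
  R \in D :|: [set majority F] ->
  ~~ alternating (profile R) /\ exists2 A, A \in D & profile A = profile R.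
Proof.
move=> oddV FD altM; rewrite inE => /orP [DR | /set1P ->].
  by split; [apply: altD | exists R].
have altF v : ~~ alternating (profile (F v)) by apply/altD/FD.
split=> //; have [v <-] := majority_profile_realized oddV altF altM.
by exists (F v).
Qed.

Lemma majority_adjoin_not_alternating (V W : finType) (F : V -> {set X}) (G : W -> {set X}) :
  odd #|V| -> odd #|W| -> (forall v, F v \in D) -> ~~ alternating (profile (majority F)) ->
  (forall w, G w \in D :|: [set majority F]) -> ~~ alternating (profile (majority G)).
Proof.
move=> oddV oddW FD altM GD.
have profG w := profile_adjoin_majority oddV FD altM (GD w).
have altG w : ~~ alternating (profile (G w)) by case: (profG w).
have inD w p : profile (G w) = p -> exists2 A, A \in D & profile A = p.
  by move=> <-; case: (profG w).
apply/negP => alt; have [c Mc] : exists c, profile (majority G) = (c, ~~ c, c).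
  by move: alt; rewrite /profile; case: (x \in _) (y \in _) (z \in _) => [] [] [] //= _;
    [exists true | exists false].
have [[u /inD [A DA pA]] [v /inD [B DB pB]] [w /inD [C DC pC]]] :=
  majority_alternating_witnesses oddW altG Mc.
(* The majority of A, B and C has profile (c, ~~ c, c) again. *)
move: pA pB pC (alt3 DA DB DC); rewrite /profile !in_majority3.
by case=> -> -> -> [-> -> ->] [-> -> ->]; case: {Mc} c.
Qed.

End Adjoin.
End Profiles.
End Majority.

Section Sticks.
Variable n : nat.
Implicit Type S : {set {set 'I_n}}.

Lemma init_or_final4E S s1 s2 s3 s4 : uniq [:: s1; s2; s3; s4] ->
  init_or_final S [:: s1; s2; s3; s4] <->
  [&& ~~ alternating (profile s1 s2 s3 S), ~~ alternating (profile s1 s2 s4 S),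
      ~~ alternating (profile s1 s3 s4 S) & ~~ alternating (profile s2 s3 s4 S)].
Proof.
rewrite [uniq _]/= !inE !negb_or andbT => /and3P [/and3P [n12 n13 n14] /andP [n23 n24] n34].
rewrite /init_or_final /profile /=; split.
  (* In a non-monotone pattern the filter equation identifies two distinct entries. *)
  case=> m [_ segment].
  case: (s1 \in S) (s2 \in S) (s3 \in S) (s4 \in S) segment => [] [] [] [] //=;
  case: m => [|[|[|[|[|m]]]]] //= [] eqs; try by []; case: eqs => *; subst;
  by rewrite ?eqxx in n12 n13 n14 n23 n24 n34.
case: (s1 \in S) (s2 \in S) (s3 \in S) (s4 \in S) => [] [] [] [] //= _;
 first [ exists 0; split=> //; by [left|right]
       | exists 1; split=> //; by [left|right]
       | exists 2; split=> //; by [left|right]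
       | exists 3; split=> //; by [left|right]
       | exists 4; split=> //; by [left|right] ].
Qed.

Lemma init_or_final4P S (s : seq {set 'I_n}) : uniq s -> size s = 4 ->
  init_or_final S s <->
  forall a b c, a < b -> b < c -> c < 4 ->
    ~~ alternating (profile (nth set0 s a) (nth set0 s b) (nth set0 s c) S).
Proof.
case: s => [|s1 [|s2 [|s3 [|s4 []]]]] // /(init_or_final4E S) segment _.
apply: iff_trans segment _; split=> [/and4P [? ? ? ?] | alt].
  by case=> [|[|[|[|a]]]] [|[|[|[|b]]]] [|[|[|[|c]]]].
by apply/and4P; split;
  [apply: (alt 0 1 2) | apply: (alt 0 1 3) | apply: (alt 0 2 3) | apply: (alt 1 2 3)].
Qed.

Lemma stick_uniq (i j k l : 'I_n) : i < j -> j < k -> k < l -> uniq (stick i j k l).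
Proof.
move=> ij jk kl; rewrite /stick /= !inE !negb_or !andbT.
do !(apply/andP; split); apply/eqP => /setP sameE;
  move: (sameE i) (sameE j) (sameE l); rewrite !inE -!val_eqE /=; lia.
Qed.

Lemma tilingP S :
  tiling S <->
  S \subset triples n /\
  forall i j k l : 'I_n, i < j -> j < k -> k < l ->
  forall a b c, a < b -> b < c -> c < 4 ->
    ~~ alternating (profile (nth set0 (stick i j k l) a) (nth set0 (stick i j k l) b)
                            (nth set0 (stick i j k l) c) S).
Proof.
split=> -[sub sticks]; split=> // i j k l ij jk kl;
  by apply/(init_or_final4P _ (stick_uniq ij jk kl)) => //; apply: sticks.
Qed.

End Sticks.

Theorem mainTheorem7 (n : nat) (Hn : 3 <= n) (D : {set {set {set 'I_n}}})
  (HD : condorcet_super_domain D)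
  (V : finType) (Hodd : odd #|V|) (Tv : V -> {set {set 'I_n}})
  (HTv : forall v, Tv v \in D) :
  condorcet_super_domain (D :|: [set sm Tv]).
Proof.
have [tilD smD] := HD.
have tilDT R : R \in D :|: [set sm Tv] -> tiling R.
  by rewrite inE => /orP [/tilD | /set1P ->]; last exact: smD.
split=> [|W Tw oddW TwD]; first exact: tilDT.
apply/tilingP; split.
  by apply: majority_sub => w; case/tilingP: (tilDT _ (TwD w)).
move=> i j k l ij jk kl a b c ab bc c4; set t := nth set0 (stick i j k l).
have noalt R : tiling R -> ~~ alternating (profile (t a) (t b) (t c) R).
  by case/tilingP => _ /(_ i j k l ij jk kl a b c ab bc c4).
apply: (majority_adjoin_not_alternating _ _ Hodd oddW HTv _ TwD).
- by move=> R /tilD /noalt.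
- move=> A B C DA DB DC; apply/noalt/smD; first by rewrite card_ord.
  by case=> [[|[|[|]]]].
- exact/noalt/smD.
Qed.
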